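(* Let $R$ be the stability function of an $L$-stable one-step method, i.e. $|R(z)| \le 1$ for all $z \in \mathbb{C}$ with $\operatorname{Re} z \le 0$ and $R(z) \to 0$ as $z \to \infty$. For fixed $\gamma \in \mathbb{R}$ let $R_\gamma(z) = 1 + \gamma(R(z) - 1)$ be the stability function of the relaxed update $u^{n+1}_\gamma = u^n + \gamma(u^{n+1} - u^n)$. If $R_\gamma$ is $A$-stable (i.e. $|R_\gamma(z)| \le 1$ for all $z$ with $\operatorname{Re} z \le 0$), then $\gamma \le 2$.
   Context: Applying the baseline method to $u' = \lambda u$, $\lambda \in \mathbb{C}$, yields $u^{n+1} = R(z) u^n$ with $z = \lambda \Delta t$; here $R$ is a rational function, as for (multiderivative) Runge-Kutta methods. *)

From HB Require Import structures.
From mathcomp Require Import all_boot all_order all_algebra.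
From mathcomp Require Import reals.
From mathcomp Require Export complex.
Set Implicit Arguments. Unset Strict Implicit. Unset Printing Implicit Defensive.
Import Order.TTheory GRing.Theory Num.Theory.
Local Open Scope ring_scope.
Local Open Scope complex_scope.

Section Stab.
Variable R : realType.
Local Notation C := (complex R).

Definition is_rational_fun (Rf : C -> C) : Prop :=
  exists P Q : {poly C}, Q != 0 /\
    forall z : C, Q.[z] != 0 -> Rf z = P.[z] / Q.[z].

(* norms `|.| are the complex modulus, valued in R[i] (real nonnegative);
   comparisons use the order of the numClosedField R[i]. *)
Definition A_stable (Rf : C -> C) : Prop :=
  forall z : C, complex.Re z <= 0 -> `|Rf z| <= 1.

Definition vanishes_at_infinity (Rf : C -> C) : Prop :=
  forall eps : R, 0 < eps -> exists M : R,
    forall z : C, M%:C < `|z| -> `|Rf z| < eps%:C.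

Definition L_stable (Rf : C -> C) : Prop :=
  A_stable Rf /\ vanishes_at_infinity Rf.

Definition relaxed_stab (gamma : R) (Rf : C -> C) (z : C) : C :=
  1 + gamma%:C * (Rf z - 1).

End Stab.

(* Along the negative real axis R(z) tends to 0, so R_gamma(z) = (1 - gamma) + gamma R(z)
   tends to 1 - gamma; A-stability of R_gamma therefore forces |1 - gamma| <= 1. *)
From HB Require Import structures.
From mathcomp Require Import all_boot all_order all_algebra.
From mathcomp Require Import reals complex.
Import Order.TTheory GRing.Theory Num.Theory.
Set Implicit Arguments. Unset Strict Implicit. Unset Printing Implicit Defensive.
Local Open Scope ring_scope.
Local Open Scope complex_scope.

Section RelaxedStability.
Variable R : realType.
Implicit Types (f : complex R -> complex R) (gamma : R).

Lemma normc_real (x : R) : `|x%:C| = `|x|%:C.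
Proof. by rewrite normc_def /= expr0n addr0 sqrtr_sqr. Qed.

Lemma vanishes_at_infinity_left_half_plane f :
  vanishes_at_infinity f ->
  forall eps : R, 0 < eps -> exists2 z : complex R, complex.Re z <= 0 & `|f z| < eps%:C.
Proof.
move=> vanish eps eps_gt0; have [M HM] := vanish eps eps_gt0.
exists (- (`|M| + 1))%:C; first by rewrite /= oppr_le0 addr_ge0.
apply: HM; rewrite normc_real normrN ltcR ger0_norm ?addr_ge0 //.
by rewrite (le_lt_trans (ler_norm M)) ?ltrDl.
Qed.

Lemma relaxed_stabE gamma f z :
  relaxed_stab gamma f z = (1 - gamma)%:C + gamma%:C * f z.
Proof. by rewrite /relaxed_stab rmorphB rmorph1 mulrBr mulr1 addrA addrAC. Qed.

Lemma ler_norm_relaxed_stab gamma f z :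
  `|(1 - gamma)%:C| <= `|relaxed_stab gamma f z| + `|gamma|%:C * `|f z|.
Proof.
have -> : (1 - gamma)%:C = relaxed_stab gamma f z - gamma%:C * f z.
  by rewrite relaxed_stabE addrK.
by rewrite -normc_real -normrM ler_normB.
Qed.

Lemma A_stable_relaxed_stab_norm_le1 gamma f :
  A_stable (relaxed_stab gamma f) ->
  (forall eps : R, 0 < eps -> exists2 z : complex R, complex.Re z <= 0 & `|f z| < eps%:C) ->
  `|1 - gamma| <= 1.
Proof.
move=> relaxedA small; apply/ler_addgt0Pr => e e_gt0.
pose eps := e / (`|gamma| + 1).
have eps_gt0 : 0 < eps by rewrite divr_gt0 // ltr_wpDl.
have [z Rez fz_small] := small eps eps_gt0.
have gamma_eps : `|gamma| * eps <= e.
  rewrite -[leRHS](divfK (lt0r_neq0 (ltr_wpDl (normr_ge0 gamma) ltr01))).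
  by rewrite mulrC ler_wpM2l ?(ltW eps_gt0) // lerDl.
rewrite -lecR -normc_real (le_trans (ler_norm_relaxed_stab gamma f z)) //.
rewrite rmorphD rmorph1 lerD ?relaxedA //.
rewrite (le_trans _ (_ : (`|gamma| * eps)%:C <= e%:C)) ?lecR // rmorphM.
by rewrite ler_wpM2l ?ler0c // ltW.
Qed.

End RelaxedStability.

Theorem theorem4p4 (R : realType) (Rf : complex R -> complex R) (gamma : R) :
  is_rational_fun Rf ->
  L_stable Rf ->
  A_stable (relaxed_stab gamma Rf) ->
  gamma <= 2.
Proof.
move=> _ [_ vanish] relaxedA.
have := A_stable_relaxed_stab_norm_le1 relaxedA
  (vanishes_at_infinity_left_half_plane vanish).
by rewrite ler_norml => /andP[+ _]; rewrite lerNl opprB lerBlDr.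
Qed.
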